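(* If $F$ is an apexed $\ell$-frame and $u,v\in V(F)$, then some hole of $F$ contains both $u$ and $v$.
   Context: A hole is an induced cycle of length at least four. A threshold graph is a graph with no induced four-vertex path, four-vertex cycle, or complement of a four-vertex cycle. $\ell$-frame for odd $\ell\ge5$: let $k\ge3$ and let $a_1,\dots,a_k,b_1,\dots,b_k$ be distinct vertices; for $1\le i\le k$ let $P_i$ be a path of length $(\ell-3)/2$ with ends $a_i,b_i$, pairwise vertex-disjoint. Let $A,B$ be graphs on $\{a_1,\dots,a_k\}$ and $\{b_1,\dots,b_k\}$ that are threshold graphs, with $b_ib_j$ an edge iff $a_ia_j$ is not an edge ($i<j$), each of $A,B$ either disconnected or two-connected. The $\ell$-frame is the union $A\cup B\cup P_1\cup\dots\cup P_k$ (no other edges). Exactly one of $A,B$ is disconnected; the apexed $\ell$-frame is obtained by adding a new vertex (the apex) adjacent exactly to all vertices of the disconnected one. $\ell$-frame for even $\ell\ge6$: let $m\ge0$, $n\ge2$, $m+n\ge3$, and let $a_1,\dots,a_n,c_1,\dots,c_m,b_1,\dots,b_n,d_1,\dots,d_m$ be distinct. $P_i$ ($1\le i\le n$) is a path of length $\ell/2-2$ between $a_i,b_i$; $Q_i$ ($1\le i\le m$) is a path of length $\ell/2-1$ between $c_i,d_i$; all pairwise vertex-disjoint. $A$ on $\{a_i\}\cup\{c_j\}$ and $B$ on $\{b_i\}\cup\{d_j\}$: $\{c_j\}$ and $\{d_j\}$ are cliques; $\{a_i\}$, $\{b_i\}$ are stable; the bipartite graph of $A$ between $\{a_i\}$ and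 $\{c_j\}$ has no induced two-edge matching; $b_id_j$ is an edge iff $a_ic_j$ is not; some $a_i$ has degree zero in $A$ and some $b_i$ has degree zero in $B$; no other edges. The $\ell$-frame is $A\cup B\cup P_1\cup\dots\cup P_n\cup Q_1\cup\dots\cup Q_m$. The apexed $\ell$-frame is obtained by adding two new vertices, one adjacent exactly to all vertices of $A$ and one adjacent exactly to all vertices of $B$. *)

From mathcomp Require Import all_boot.
Set Implicit Arguments. Unset Strict Implicit. Unset Printing Implicit Defensive.

Section Graphs.
Variable T : finType.

(* C is a hole of (T,e): the vertex set of an induced cycle of length >= 4.
   s lists the cycle in order (x0 is an irrelevant default); adjacency among vertices of s is exactly
   cyclic consecutiveness. *)
Definition hole (e : rel T) (C : {set T}) : Prop :=
  exists (x0 : T) (s : seq T),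
    [/\ uniq s, 4 <= size s, C = [set x in s] &
      forall i j, i < size s -> j < size s ->
        e (nth x0 s i) (nth x0 s j) =
        (j == i.+1 %% size s) || (i == j.+1 %% size s)].

Definition path_edge (s : seq T) (x y : T) : Prop :=
  exists j, j.+1 < size s /\
    ((x = nth x s j /\ y = nth x s j.+1) \/ (y = nth y s j /\ x = nth y s j.+1)).
End Graphs.

Section IndexGraphs.
Variable I : finType.

Definition connected_graph (g : rel I) : Prop := forall i j, connect g i j.

Definition two_connected (g : rel I) : Prop :=
  connected_graph g /\
  forall v i j, i != v -> j != v ->
    connect [rel x y | [&& x != v, y != v & g x y]] i j.

(* threshold graph: no induced P4, C4 or 2K2 (complement of C4) *)
Definition threshold (g : rel I) : Prop :=
  forall w x y z : I, uniq [:: w; x; y; z] ->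
    ~ [/\ g w x, g x y, g y z, ~~ g w y & ~~ g x z && ~~ g w z] /\
    ~ [/\ g w x, g x y, g y z, g z w & ~~ g w y && ~~ g x z] /\
    ~ [/\ g w x, g y z, ~~ g w y, ~~ g w z & ~~ g x y && ~~ g x z].
End IndexGraphs.

(* vertex sequence of P_i = a_i, (interior Q_i), b_i *)
Definition fpath (T : finType) (x : T) (q : seq T) (y : T) : seq T :=
  x :: rcons q y.

Definition odd_apexed_frame (l : nat) (T : finType) (e : rel T) : Prop :=
  exists (k : nat) (rA : rel 'I_k) (a b : 'I_k -> T) (Q : 'I_k -> seq T) (z : T),
    let gA := [rel i j | (i != j) && rA i j] in
    let gB := [rel i j | (i != j) && ~~ rA i j] in
    let P := fun i => fpath (a i) (Q i) (b i) in
    [/\ 3 <= k, symmetric rA,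
        (* P_i has length (l-3)/2, i.e. (l-3)/2 - 1 interior vertices *)
        (forall i, (size (Q i)).+1 = (l - 3) %/ 2),
        uniq (z :: flatten [seq P i | i <- enum 'I_k]) /\
        (forall x, x \in z :: flatten [seq P i | i <- enum 'I_k]) &
        [/\ threshold gA, threshold gB,
            ~ connected_graph gA \/ two_connected gA,
            ~ connected_graph gB \/ two_connected gB &
            (* edge set: A, B, the paths, and the apex joined to the
               disconnected one of A, B *)
            forall x y, e x y <->
              (exists i j, [/\ x = a i, y = a j & gA i j]) \/
              (exists i j, [/\ x = b i, y = b j & gB i j]) \/
              (exists i, path_edge (P i) x y) \/
              (~ connected_graph gA /\
                 ((x = z /\ exists i, y = a i) \/ (y = z /\ exists i, x = a i))) \/
              (~ connected_graph gB /\
                 ((x = z /\ exists i, y = b i) \/ (y = z /\ exists i, x = b i)))]].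

Definition even_apexed_frame (l : nat) (T : finType) (e : rel T) : Prop :=
  exists (m n : nat) (r : 'I_n -> 'I_m -> bool)
         (a b : 'I_n -> T) (c d : 'I_m -> T)
         (QP : 'I_n -> seq T) (QQ : 'I_m -> seq T) (za zb : T),
    let P := fun i => fpath (a i) (QP i) (b i) in
    let Q := fun j => fpath (c j) (QQ j) (d j) in
    let V := za :: zb :: flatten [seq P i | i <- enum 'I_n]
                ++ flatten [seq Q j | j <- enum 'I_m] in
    [/\ 2 <= n /\ 3 <= m + n,
        (* P_i has length l/2 - 2, Q_j has length l/2 - 1 *)
        (forall i, (size (QP i)).+1 = l %/ 2 - 2) /\
        (forall j, (size (QQ j)).+1 = l %/ 2 - 1),
        uniq V /\ (forall x, x \in V),
        (* the bipartite graph of A between {a_i} and {c_j} has no induced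
           two-edge matching *)
        (forall i1 i2 j1 j2, ~ [/\ r i1 j1, r i2 j2, ~~ r i1 j2 & ~~ r i2 j1]) /\
        (* some a_i has degree 0 in A; some b_i has degree 0 in B *)
        (exists i, forall j, ~~ r i j) /\ (exists i, forall j, r i j) &
        forall x y, e x y <->
          (* A: c's form a clique, a's are stable, a_i c_j iff r i j *)
          (exists j1 j2, [/\ x = c j1, y = c j2 & j1 != j2]) \/
          (exists i j, (x = a i /\ y = c j \/ y = a i /\ x = c j) /\ r i j) \/
          (* B: d's form a clique, b's are stable, b_i d_j iff not r i j *)
          (exists j1 j2, [/\ x = d j1, y = d j2 & j1 != j2]) \/
          (exists i j, (x = b i /\ y = d j \/ y = b i /\ x = d j) /\ ~~ r i j) \/
          (exists i, path_edge (P i) x y) \/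
          (exists j, path_edge (Q j) x y) \/
          ((x = za /\ ((exists i, y = a i) \/ (exists j, y = c j))) \/
           (y = za /\ ((exists i, x = a i) \/ (exists j, x = c j)))) \/
          ((x = zb /\ ((exists i, y = b i) \/ (exists j, y = d j))) \/
           (y = zb /\ ((exists i, x = b i) \/ (exists j, x = d j))))].

(* F (given as (T,e)) is an apexed l-frame, up to isomorphism *)
Definition apexed_frame (l : nat) (T : finType) (e : rel T) : Prop :=
  (odd l /\ 5 <= l /\ odd_apexed_frame l e) \/
  (~~ odd l /\ 6 <= l /\ even_apexed_frame l e).

From Pilot Require Import Defs.
From mathcomp Require Import all_boot zify.
Set Implicit Arguments. Unset Strict Implicit. Unset Printing Implicit Defensive.

(* Every vertex of an apexed frame is an apex or lies on one of the paths, so the frame is the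
   image of a small combinatorial model whose vertices are the apexes and the pairs
   (path, position); in the model, holes of length l through any two vertices are explicit.

   Odd l: exactly one of A and B is connected, since a dominating vertex of a connected threshold
   graph is isolated in the complement, and reversing every path exchanges A and B; so let A be
   connected and the apex z see all of B.  For an edge a_i a_j of A the cycle
   z - P_i - a_i a_j - P_j - z is a hole.  A connected threshold graph has diameter at most two,
   so for a non-edge a_i a_j there is a common neighbour a_h, and
   a_i - P_i - b_i b_j - P_j - a_j a_h a_i is a hole.

   Even l: with apexes z_A and z_B, the holes are z_A - P_i - z_B - P_i' - z_A, then
   z_A - Q_j - d_j b_i - P_i - z_A when a_i c_j is a non-edge, its mirror image through z_B when
   a_i c_j is an edge, and Q_j - d_j d_j' - Q_j' - c_j' c_j.  The a_i of degree zero in A and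
   the b_i of degree zero in B take care of the pairs formed by an apex and a vertex of a Q_j. *)

(* [q] is the successor of [p] modulo [N] or vice versa, written without [%%] so that [lia]
   can decide it. *)
Definition cyc_adj (N p q : nat) : bool :=
  ((p.+1 < N) && (q == p.+1)) || ((p.+1 == N) && (q == 0)) ||
  ((q.+1 < N) && (p == q.+1)) || ((q.+1 == N) && (p == 0)).

Lemma eq_succ_mod N p q : p < N ->
  (q == p.+1 %% N) = ((p.+1 < N) && (q == p.+1)) || ((p.+1 == N) && (q == 0)).
Proof.
move=> ltpN; have [ltp1N | leNp1] := ltnP p.+1 N; first by rewrite modn_small //; lia.
have -> : p.+1 = N by apply/eqP; rewrite eqn_leq leNp1 ltpN.
by rewrite modnn; lia.
Qed.

Section InducedCycles.
Variables (D : Type) (valid : pred D) (adj : rel D).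

Definition induced_cycle (f : nat -> D) (N : nat) : Prop :=
  [/\ 4 <= N, forall p, p < N -> valid (f p),
      forall p q, p < N -> q < N -> f p = f q -> p = q &
      forall p q, p < N -> q < N -> adj (f p) (f q) = cyc_adj N p q].

Definition on_cycle (f : nat -> D) (N : nat) (x : D) : Prop := exists2 p, p < N & f p = x.

Definition hole_through (x y : D) : Prop :=
  exists f N, [/\ induced_cycle f N, on_cycle f N x & on_cycle f N y].

Lemma hole_throughC x y : hole_through x y -> hole_through y x.
Proof. by case=> f [N [cf hx hy]]; exists f, N. Qed.

Lemma induced_cycle_hole_through f N x y :
  induced_cycle f N -> on_cycle f N x -> on_cycle f N y -> hole_through x y.
Proof. by move=> cf hx hy; exists f, N. Qed.
End InducedCycles.

Lemma hole_through_morph (D D' : Type) (valid : pred D) (valid' : pred D')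
    (adj : rel D) (adj' : rel D') (phi : D -> D') :
  (forall x, valid x -> valid' (phi x)) ->
  (forall x y, valid x -> valid y -> phi x = phi y -> x = y) ->
  (forall x y, valid x -> valid y -> adj' (phi x) (phi y) = adj x y) ->
  forall x y, hole_through valid adj x y -> hole_through valid' adj' (phi x) (phi y).
Proof.
move=> phi_valid phi_inj phi_adj x y [f [N [[N4 fv finj fadj] [p ltpN <-] [q ltqN <-]]]].
exists (phi \o f), N; split; [split=> // | by exists p | by exists q].
- by move=> r ltrN /=; apply/phi_valid/fv.
- move=> r s ltrN ltsN /= eq_phi; apply: finj => //.
  exact: phi_inj (fv r ltrN) (fv s ltsN) eq_phi.
- by move=> r s ltrN ltsN /=; rewrite phi_adj ?fv ?fadj.
Qed.

Section Realisation.
Variables (T : finType) (e : rel T) (D : Type) (valid : pred D) (adj : rel D) (emb : D -> T).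
Hypotheses (emb_inj : forall x y, valid x -> valid y -> emb x = emb y -> x = y)
  (emb_adj : forall x y, valid x -> valid y -> e (emb x) (emb y) = adj x y).

Lemma induced_cycle_hole f N :
  induced_cycle valid adj f N -> hole e [set x in mkseq (emb \o f) N].
Proof.
case=> N4 fv finj fadj; exists (emb (f 0)), (mkseq (emb \o f) N); split.
- rewrite map_inj_in_uniq ?iota_uniq // => p q; rewrite !mem_iota /= !add0n => ltpN ltqN.
  by move/emb_inj => /(_ (fv p ltpN) (fv q ltqN)) /finj; apply.
- by rewrite size_mkseq.
- by [].
- move=> p q; rewrite size_mkseq => ltpN ltqN; rewrite !nth_mkseq //=.
  by rewrite emb_adj ?fv // fadj // /cyc_adj !eq_succ_mod // !orbA.
Qed.

Lemma hole_through_hole x y : hole_through valid adj x y ->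
  exists C : {set T}, hole e C /\ emb x \in C /\ emb y \in C.
Proof.
case=> f [N [cf [p ltpN <-] [q ltqN <-]]].
exists [set x in mkseq (emb \o f) N]; split; first exact: induced_cycle_hole.
by rewrite !inE; split; apply: (map_f (emb \o f)); rewrite mem_iota.
Qed.

Lemma common_hole_of_model : (forall u, exists2 x, valid x & u = emb x) ->
  (forall x y, valid x -> valid y -> hole_through valid adj x y) ->
  forall u v : T, exists C : {set T}, hole e C /\ u \in C /\ v \in C.
Proof.
move=> emb_surj model_holes u v.
have [x vx ->] := emb_surj u; have [y vy ->] := emb_surj v.
exact/hole_through_hole/model_holes.
Qed.
End Realisation.

Section Connectivity.
Variables (I : finType) (g : rel I).
Hypothesis g_sym : symmetric g.

Lemma isolated_not_connected (i j : I) :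
  j != i -> (forall x, ~~ g i x) -> ~ connected_graph g.
Proof.
move=> neq_ji iso_i /(_ i j) /connectP [[|x p] /= gp lastp].
  by rewrite lastp eqxx in neq_ji.
by move: gp; rewrite (negbTE (iso_i x)).
Qed.

Lemma not_connected_graph : ~ connected_graph g -> exists i j, ~~ connect g i j.
Proof.
move=> g_disc; have : ~~ [forall i, [forall j, connect g i j]].
  by apply/negP => /forallP conn; apply: g_disc => i j; apply/forallP/conn.
by move/forallPn => [i /forallPn [j nconn]]; exists i, j.
Qed.

Lemma connected_graph_compl (h : rel I) :
  (forall i j, i != j -> ~~ g i j -> h i j) -> ~ connected_graph g -> connected_graph h.
Proof.
move=> gh /not_connected_graph [p [q npq]] i j.
have [->|neq_ij] := eqVneq i j; first exact: connect0.
have [gij|ngij] := boolP (g i j); last exact/connect1/gh.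
have [w nconn_iw] : exists w, ~~ connect g i w.
  have [conn_ip|] := boolP (connect g i p); last by exists p.
  exists q; apply: contra npq => conn_iq; apply: connect_trans conn_iq.
  by rewrite (sym_connect_sym g_sym).
have nconn_jw : ~~ connect g j w.
  by apply: contra nconn_iw; apply/connect_trans/connect1.
have neq_iw : i != w by apply: contraNneq nconn_iw => ->; apply: connect0.
have neq_wj : w != j by apply: contraNneq nconn_jw => ->; apply: connect0.
apply: (@connect_trans _ _ w); apply/connect1/gh => //.
- by apply: contra nconn_iw => /connect1.
- by rewrite g_sym; apply: contra nconn_jw => /connect1.
Qed.
End Connectivity.

Section ThresholdGraphs.
Variables (I : finType) (g : rel I).
Hypotheses (g_sym : symmetric g) (g_irr : irreflexive g) (g_threshold : threshold g).

Lemma threshold_common_neighbour i j : connect g i j -> i != j -> ~~ g i j ->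
  exists h, g i h && g h j.
Proof.
pose near y := (y == i) || g i y || [exists w, g i w && g w y].
have near_step x y : near x -> g x y -> near y.
  move=> near_x gxy.
  have [->|neq_yi] := eqVneq y i; first by rewrite /near eqxx.
  have [giy|ngiy] := boolP (g i y); first by rewrite /near giy orbT.
  have [eq_xi|neq_xi] := eqVneq x i; first by rewrite -eq_xi gxy in ngiy.
  have [gix|ngix] := boolP (g i x).
    by apply/orP; right; apply/existsP; exists x; rewrite gix gxy.
  move: near_x; rewrite /near (negbTE neq_xi) (negbTE ngix) /=.
  case/existsP => w /andP [giw gwx].
  have [gwy|ngwy] := boolP (g w y).
    by apply/orP; right; apply/existsP; exists w; rewrite giw gwy.
  have uniq_iwxy : uniq [:: i; w; x; y].
    have neq_iw : i != w by apply: contraTneq giw => ->; rewrite g_irr.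
    have neq_wx : w != x by apply: contraTneq gwx => ->; rewrite g_irr.
    have neq_xy : x != y by apply: contraTneq gxy => ->; rewrite g_irr.
    have neq_wy : w != y by apply: contraNneq ngiy => <-.
    by rewrite /= !inE !negb_or neq_iw neq_wx neq_xy neq_wy eq_sym neq_xi eq_sym neq_yi.
  by case: (g_threshold uniq_iwxy) => P4 _; case: P4; split; rewrite ?ngwy.
case/connectP=> p gp -> neq_ij ngij.
have near_last x : near x -> path g x p -> near (last x p).
  elim: p x {gp neq_ij ngij} => [|y p IHp] x //= near_x /andP [gxy gp].
  exact: IHp (near_step _ _ near_x gxy) gp.
have near_i : near i by rewrite /near eqxx.
move: (near_last i near_i gp).
rewrite /near eq_sym (negbTE neq_ij) (negbTE ngij) /=.
by case/existsP=> w gw; exists w.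
Qed.

Lemma threshold_dominating (i0 : I) : connected_graph g -> exists x, forall y, y != x -> g x y.
Proof.
move=> g_conn; pose nbh x := [set y | g x y].
have [x _ max_x] := @arg_maxnP I i0 predT (fun x => #|nbh x|) isT.
exists x => y neq_yx; apply/negPn/negP => ngxy.
have neq_xy : x != y by rewrite eq_sym.
have [w /andP [gxw gwy]] := threshold_common_neighbour (g_conn x y) neq_xy ngxy.
have nbh_sub : x |: (nbh x :\ w) \proper nbh w.
  apply/properP; split; last first.
    exists y; first by rewrite inE.
    by rewrite !inE negb_or (negbTE ngxy) andbF neq_yx.
  apply/subsetP => z; rewrite !inE => /orP [/eqP -> | /andP [neq_zw gxz]].
    by rewrite g_sym.
  apply/negPn/negP => ngwz.
  have uniq_zxwy : uniq [:: z; x; w; y].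
    have neq_zx : z != x by apply: contraTneq gxz => ->; rewrite g_irr.
    have neq_xw : x != w by apply: contraTneq gxw => ->; rewrite g_irr.
    have neq_wy : w != y by apply: contraTneq gwy => ->; rewrite g_irr.
    have neq_zy : z != y by apply: contraTneq gxz => ->; rewrite (negbTE ngxy).
    by rewrite /= !inE !negb_or neq_zx neq_xw neq_wy neq_zy neq_zw eq_sym neq_yx.
  have [P4 [C4 _]] := g_threshold uniq_zxwy.
  have gzx : g z x by rewrite g_sym.
  have ngzw : ~~ g z w by rewrite g_sym.
  have [gzy|ngzy] := boolP (g z y).
  - by apply: C4; split; rewrite // ?ngzw ?ngxy // g_sym.
  - by apply: P4; split; rewrite // ?ngzw ?ngxy ?ngzy.
have := proper_card nbh_sub; rewrite cardsU1 !inE g_irr andbF /=.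
have := max_x w isT; have := cardsD1 w (nbh x); rewrite inE gxw /=.
lia.
Qed.

Lemma threshold_compl_not_connected (h : rel I) (i0 j0 : I) : j0 != i0 ->
  (forall i j, h i j -> (i != j) && ~~ g i j) -> connected_graph g -> ~ connected_graph h.
Proof.
move=> neq_ji hg g_conn; have [x dom_x] := threshold_dominating i0 g_conn.
have [y neq_yx] : exists y, y != x.
  by have [<-|] := eqVneq i0 x; [exists j0 | exists i0].
apply: (isolated_not_connected neq_yx) => z; apply/negP => /hg /andP [neq_xz].
by rewrite dom_x // eq_sym.
Qed.

Lemma compl_connected_graph (h : rel I) (i0 j0 : I) : j0 != i0 -> symmetric h ->
  (forall i j, h i j = (i != j) && ~~ g i j) -> connected_graph g <-> ~ connected_graph h.
Proof.
move=> neq_ji h_sym hE; split.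
  by apply: threshold_compl_not_connected neq_ji _ => i j; rewrite hE.
by apply: (connected_graph_compl h_sym) => i j neq_ij; rewrite hE neq_ij negbK.
Qed.
End ThresholdGraphs.

Ltac case_ifs := repeat (case: ifP => ?).

(* zify turns every disequality of ordinals into a disjunction, so [lia] is exponential in
   their number unless they are cleared first. *)
Ltac nat_lia :=
  repeat match goal with H : is_true (_ != _) |- _ => clear H end; lia.

Ltac cycle_inj :=
  move=> p q ltpN ltqN; case_ifs;
  first [ discriminate
        | move=> _; nat_lia
        | case=> *; subst;
          first [ match goal with H : is_true (?x != ?x) |- _ => by rewrite eqxx in H end
                | nat_lia ] ].

Ltac on_cycle_at p :=
  exists p; [nat_lia | rewrite /=; case_ifs;
                       first [reflexivity | exfalso; nat_lia | f_equal; nat_lia]].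

Lemma exists_neq_ord k (i : 'I_k) : 1 < k -> exists j : 'I_k, j != i.
Proof.
move=> lt1k; pose i0 := Ordinal (ltnW lt1k).
have [->|neq_i0] := eqVneq i i0; last by exists i0; rewrite eq_sym.
by exists (Ordinal lt1k).
Qed.

Lemma connected_graph_neighbour k (g : rel 'I_k) (i : 'I_k) : 1 < k -> connected_graph g ->
  exists j, g i j.
Proof.
move=> lt1k g_conn; have [j neq_ji] := exists_neq_ord i lt1k.
case: (pickP (g i)) => [h gih | iso_i]; first by exists h.
by exfalso; apply: (isolated_not_connected neq_ji) g_conn => x; rewrite iso_i.
Qed.

Section DisjointFamilies.
Variables (T : eqType) (I : finType) (F : I -> seq T).

Lemma uniq_flatten_map (r : seq I) : uniq r -> uniq (flatten [seq F i | i <- r]) ->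
  (forall i, i \in r -> uniq (F i)) /\
  (forall i j x, i \in r -> j \in r -> x \in F i -> x \in F j -> i = j).
Proof.
elim: r => [|i0 r IHr] //=; rewrite cat_uniq.
move=> /andP [i0_notin_r uniq_r] /and3P [uniq_i0 disj uniq_F].
have [IH_uniq IH_disj] := IHr uniq_r uniq_F.
have notin_i0 j x : j \in r -> x \in F j -> x \notin F i0.
  by move=> rj Fjx; apply: (hasPn disj); apply/flatten_mapP; exists j.
split=> [i | i j x]; rewrite !inE.
  by case/orP=> [/eqP -> // | /IH_uniq].
move=> /orP [/eqP -> | ri] /orP [/eqP -> | rj] // Fix Fjx.
- by rewrite (negbTE (notin_i0 _ _ rj Fjx)) in Fix.
- by rewrite (negbTE (notin_i0 _ _ ri Fix)) in Fjx.
- exact: IH_disj ri rj Fix Fjx.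
Qed.

Hypothesis uniq_F : uniq (flatten [seq F i | i <- enum I]).

Lemma mem_flatten_enum i x : x \in F i -> x \in flatten [seq F i | i <- enum I].
Proof. by move=> Fix; apply/flatten_mapP; exists i; rewrite ?mem_enum. Qed.

Lemma nth_flatten_inj x0 i j t t' : t < size (F i) -> t' < size (F j) ->
  nth x0 (F i) t = nth x0 (F j) t' -> i = j /\ t = t'.
Proof.
have [uniq_Fi disj_F] := uniq_flatten_map (enum_uniq I) uniq_F.
move=> lt_t lt_t' eq_nth.
have eq_ij : i = j.
  by apply: (disj_F i j (nth x0 (F i) t)); rewrite ?mem_enum ?mem_nth // eq_nth mem_nth.
subst j; split=> //; apply/eqP; rewrite -(nth_uniq x0 lt_t lt_t') ?eq_nth //.
by apply: uniq_Fi; rewrite mem_enum.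
Qed.
End DisjointFamilies.

Lemma path_edgeE (T : finType) (x0 : T) (s : seq T) x y : path_edge s x y <->
  exists2 j, j.+1 < size s &
    (x = nth x0 s j /\ y = nth x0 s j.+1) \/ (y = nth x0 s j /\ x = nth x0 s j.+1).
Proof.
have nthE j x1 : j.+1 < size s -> nth x1 s j = nth x0 s j /\ nth x1 s j.+1 = nth x0 s j.+1.
  by move=> lt_js; rewrite !(set_nth_default x0 x1) // ltnW.
split=> [[j [lt_js]] | [j lt_js edge]].
  by have [-> ->] := nthE j x lt_js; have [-> ->] := nthE j y lt_js; exists j.
by exists j; split=> //; have [-> ->] := nthE j x lt_js; have [-> ->] := nthE j y lt_js.
Qed.

Lemma size_fpath (T : finType) (x : T) q y : size (Defs.fpath x q y) = (size q).+2.
Proof. by rewrite /= size_rcons. Qed.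

Lemma nth_fpath_last (T : finType) (x0 x : T) q y : nth x0 (Defs.fpath x q y) (size q).+1 = y.
Proof. by rewrite /= nth_rcons ltnn eqxx. Qed.

Section PathEdgeEmbedding.
Variables (T : finType) (D : Type) (valid : pred D) (emb : D -> T) (x0 : T) (s : seq T)
  (M : nat) (vert : nat -> D).
Hypotheses (size_s : size s = M.+1) (nth_s : forall t, t <= M -> nth x0 s t = emb (vert t))
  (valid_vert : forall t, t <= M -> valid (vert t))
  (emb_inj : forall x y, valid x -> valid y -> emb x = emb y -> x = y).

Lemma path_edge_emb x y : valid x -> valid y ->
  path_edge s (emb x) (emb y) <->
  exists2 t, t < M & (x = vert t /\ y = vert t.+1) \/ (y = vert t /\ x = vert t.+1).
Proof.
move=> vx vy; rewrite (path_edgeE x0) size_s.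
split=> [[t lt_tM edge] | [t lt_tM edge]]; exists t => //; last first.
  rewrite (nth_s (ltnW lt_tM)) (nth_s lt_tM).
  by case: edge => [[-> ->] | [-> ->]]; [left | right].
rewrite ltnS in lt_tM.
have v_t : valid (vert t) by apply/valid_vert/ltnW.
have v_t1 : valid (vert t.+1) by apply/valid_vert.
rewrite (nth_s (ltnW lt_tM)) (nth_s lt_tM) in edge.
case: edge => [[ex ey] | [ey ex]]; [left | right].
- by rewrite (emb_inj vx v_t ex) (emb_inj vy v_t1 ey).
- by rewrite (emb_inj vy v_t ey) (emb_inj vx v_t1 ex).
Qed.
End PathEdgeEmbedding.

(* [OVert i t] is the vertex of P_i at distance [t] from a_i, so a_i = [OVert i 0] and
   b_i = [OVert i L]; [apexA] and [apexB] in [odd_adj] say whether the apex sees the a_i or the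
   b_i. *)
Inductive odd_vertex (k : nat) := OApex | OVert of 'I_k & nat.
Arguments OApex {k}.

Section OddModel.
Variables (k L : nat).

Definition odd_valid (x : odd_vertex k) : bool := if x is OVert _ t then t <= L else true.

Definition odd_adj (apexA apexB : bool) (g : rel 'I_k) (x y : odd_vertex k) : bool :=
  match x, y with
  | OApex, OApex => false
  | OApex, OVert _ t | OVert _ t, OApex => ((t == 0) && apexA) || ((t == L) && apexB)
  | OVert i t, OVert j t' =>
      if i == j then (t.+1 == t') || (t'.+1 == t)
      else ((t == 0) && (t' == 0) && g i j) || ((t == L) && (t' == L) && ~~ g i j)
  end.

Lemma odd_adj_eq_rel (g g' : rel 'I_k) apexA apexB x y :
  (forall i j, i != j -> g i j = g' i j) ->
  odd_adj apexA apexB g x y = odd_adj apexA apexB g' x y.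
Proof.
move=> gg'; case: x y => [|i t] [|j t'] //=.
by have [//|neq_ij] := eqVneq i j; rewrite gg'.
Qed.

(* Reversing every path exchanges the roles of A and B. *)
Definition odd_flip (x : odd_vertex k) : odd_vertex k :=
  if x is OVert i t then OVert i (L - t) else OApex.

Lemma odd_flip_valid x : odd_valid x -> odd_valid (odd_flip x).
Proof. by case: x => //= i t _; rewrite leq_subr. Qed.

Lemma odd_flipK x : odd_valid x -> odd_flip (odd_flip x) = x.
Proof. by case: x => //= i t le_tL; rewrite subKn. Qed.

Lemma odd_adj_flip (g g' : rel 'I_k) x y : (forall i j, i != j -> g' i j = ~~ g i j) ->
  odd_valid x -> odd_valid y ->
  odd_adj true false g' (odd_flip x) (odd_flip y) = odd_adj false true g x y.
Proof.
move=> gg'; case: x y => [|i t] [|j t'] //= vx vy; rewrite ?andbT ?andbF ?orbF; try lia.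
have [_|neq_ij] := eqVneq i j; first lia.
by rewrite gg' //; case: (g i j); lia.
Qed.

Variable g : rel 'I_k.
Hypotheses (L_gt0 : 0 < L) (g_sym : symmetric g) (g_irr : irreflexive g).

Definition odd_cycle_edge (i j : 'I_k) (p : nat) : odd_vertex k :=
  if p == 0 then OApex else if p <= L.+1 then OVert i (L.+1 - p) else OVert j (p - L.+2).

Definition odd_cycle_nonedge (i j h : 'I_k) (p : nat) : odd_vertex k :=
  if p <= L then OVert i p else if p <= L + L + 1 then OVert j (L + L + 1 - p) else OVert h 0.

Lemma neq_of_adj i j : g i j -> i != j.
Proof. by apply: contraTneq => ->; rewrite g_irr. Qed.

Lemma odd_cycle_edge_induced i j : g i j ->
  induced_cycle odd_valid (odd_adj false true g) (odd_cycle_edge i j) (L + L + 3).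
Proof.
move=> gij; have neq_ij := neq_of_adj gij; have gji : g j i by rewrite g_sym.
have neq_ji : j != i by rewrite eq_sym.
rewrite /odd_cycle_edge; split; first by nat_lia.
- by move=> p ltpN; case_ifs => /=; nat_lia.
- by cycle_inj.
- move=> p q ltpN ltqN; case_ifs;
    rewrite /odd_adj ?eqxx ?(negbTE neq_ij) ?(negbTE neq_ji) ?gij ?gji /cyc_adj /=; nat_lia.
Qed.

Lemma odd_cycle_nonedge_induced i j h : i != j -> ~~ g i j -> g i h -> g h j ->
  induced_cycle odd_valid (odd_adj false true g) (odd_cycle_nonedge i j h) (L + L + 3).
Proof.
move=> neq_ij ngij gih ghj; have ngji : ~~ g j i by rewrite g_sym.
have neq_ji : j != i by rewrite eq_sym.
have ghi : g h i by rewrite g_sym.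
have gjh : g j h by rewrite g_sym.
have neq_ih := neq_of_adj gih; have neq_hi := neq_of_adj ghi.
have neq_hj := neq_of_adj ghj; have neq_jh := neq_of_adj gjh.
rewrite /odd_cycle_nonedge; split; first by nat_lia.
- by move=> p ltpN; case_ifs => /=; nat_lia.
- by cycle_inj.
- move=> p q ltpN ltqN; case_ifs;
    rewrite /odd_adj ?eqxx ?(negbTE neq_ij) ?(negbTE neq_ji) ?(negbTE ngij) ?(negbTE ngji)
      ?(negbTE neq_ih) ?(negbTE neq_hi) ?(negbTE neq_hj) ?(negbTE neq_jh)
      ?gih ?ghi ?gjh ?ghj /cyc_adj /=; nat_lia.
Qed.

Lemma on_odd_cycle_edge_apex i j : on_cycle (odd_cycle_edge i j) (L + L + 3) OApex.
Proof. by exists 0; rewrite ?addn3. Qed.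

Section OnCycles.
Variables (i j h : 'I_k) (t : nat).
Hypothesis le_tL : t <= L.

Lemma on_odd_cycle_edge_l : on_cycle (odd_cycle_edge i j) (L + L + 3) (OVert i t).
Proof. by rewrite /odd_cycle_edge; on_cycle_at (L.+1 - t). Qed.

Lemma on_odd_cycle_edge_r : on_cycle (odd_cycle_edge i j) (L + L + 3) (OVert j t).
Proof. by rewrite /odd_cycle_edge; on_cycle_at (t + L.+2). Qed.

Lemma on_odd_cycle_nonedge_l : on_cycle (odd_cycle_nonedge i j h) (L + L + 3) (OVert i t).
Proof. by rewrite /odd_cycle_nonedge; on_cycle_at t. Qed.

Lemma on_odd_cycle_nonedge_r : on_cycle (odd_cycle_nonedge i j h) (L + L + 3) (OVert j t).
Proof. by rewrite /odd_cycle_nonedge; on_cycle_at (L + L + 1 - t). Qed.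
End OnCycles.

Hypotheses (lt1k : 1 < k) (g_conn : connected_graph g) (g_threshold : threshold g).

Lemma odd_model_hole_through x y : odd_valid x -> odd_valid y ->
  hole_through odd_valid (odd_adj false true g) x y.
Proof.
have nbr i := connected_graph_neighbour i lt1k g_conn.
have apex_vert i t : t <= L -> hole_through odd_valid (odd_adj false true g) OApex (OVert i t).
  move=> le_tL; have [j gij] := nbr i.
  apply: induced_cycle_hole_through (odd_cycle_edge_induced gij) _ _.
  - exact: on_odd_cycle_edge_apex.
  - exact: on_odd_cycle_edge_l.
case: x => [|i t] /= vx; case: y => [|j t'] /= vy.
- have [j gij] := nbr (Ordinal (ltnW lt1k)).
  by apply: induced_cycle_hole_through (odd_cycle_edge_induced gij) _ _;
    apply: on_odd_cycle_edge_apex.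
- exact: apex_vert.
- exact/hole_throughC/apex_vert.
have [<-|neq_ij] := eqVneq i j.
  have [h gih] := nbr i.
  by apply: induced_cycle_hole_through (odd_cycle_edge_induced gih) _ _;
    apply: on_odd_cycle_edge_l.
have [gij|ngij] := boolP (g i j).
  apply: induced_cycle_hole_through (odd_cycle_edge_induced gij) _ _.
  - exact: on_odd_cycle_edge_l.
  - exact: on_odd_cycle_edge_r.
have [h /andP [gih ghj]] := threshold_common_neighbour g_irr g_threshold (g_conn i j) neq_ij ngij.
apply: induced_cycle_hole_through (odd_cycle_nonedge_induced neq_ij ngij gih ghj) _ _.
- exact: on_odd_cycle_nonedge_l.
- exact: on_odd_cycle_nonedge_r.
Qed.
End OddModel.

Section OddFrame.
Variables (T : finType) (e : rel T) (k L : nat) (rA : rel 'I_k)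
  (a b : 'I_k -> T) (Q : 'I_k -> seq T) (z : T).
Local Notation P i := (Defs.fpath (a i) (Q i) (b i)).
Hypotheses (size_Q : forall i, (size (Q i)).+1 = L)
  (uniq_V : uniq (z :: flatten [seq P i | i <- enum 'I_k]))
  (mem_V : forall x, x \in z :: flatten [seq P i | i <- enum 'I_k]).

Definition odd_emb (x : odd_vertex k) : T := if x is OVert i t then nth z (P i) t else z.

Lemma size_odd_path i : size (P i) = L.+1.
Proof. by rewrite size_fpath size_Q. Qed.

Lemma odd_emb_a i : a i = odd_emb (OVert i 0).
Proof. by []. Qed.

Lemma odd_emb_b i : b i = odd_emb (OVert i L).
Proof. by rewrite /= -(size_Q i) nth_fpath_last. Qed.

Lemma odd_emb_inj x y : odd_valid L x -> odd_valid L y -> odd_emb x = odd_emb y -> x = y.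
Proof.
move: uniq_V; rewrite cons_uniq => /andP [z_notin uniq_P].
have in_P i t : t <= L -> nth z (P i) t \in flatten [seq P i | i <- enum 'I_k].
  by move=> le_tL; apply/mem_flatten_enum/mem_nth; rewrite size_odd_path.
case: x => [|i t]; case: y => [|j t'] //= vx vy.
- by move=> eq_z; rewrite eq_z in_P in z_notin.
- by move=> eq_z; rewrite -eq_z in_P in z_notin.
- have lt_t : t < size (P i) by rewrite size_odd_path.
  have lt_t' : t' < size (P j) by rewrite size_odd_path.
  by case/(nth_flatten_inj uniq_P lt_t lt_t') => -> ->.
Qed.

Lemma odd_emb_surj x : exists2 d, odd_valid L d & x = odd_emb d.
Proof.
move: (mem_V x); rewrite inE => /orP [/eqP -> | /flatten_mapP [i _ Pix]]; first by exists OApex.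
exists (OVert i (index x (P i))); last by rewrite /= nth_index.
by move: (index_mem x (P i)); rewrite size_odd_path ltnS Pix.
Qed.

Lemma path_edge_odd_emb i x y : odd_valid L x -> odd_valid L y ->
  path_edge (P i) (odd_emb x) (odd_emb y) <->
  exists2 t, t < L & (x = OVert i t /\ y = OVert i t.+1) \/ (y = OVert i t /\ x = OVert i t.+1).
Proof.
by apply: (path_edge_emb (valid := odd_valid L) (emb := odd_emb) (vert := OVert i) (x0 := z));
  rewrite ?size_odd_path //; apply: odd_emb_inj.
Qed.

Definition odd_frame_edge (cA cB : Prop) (x y : T) : Prop :=
  (exists i j, [/\ x = a i, y = a j & (i != j) && rA i j]) \/
  (exists i j, [/\ x = b i, y = b j & (i != j) && ~~ rA i j]) \/
  (exists i, path_edge (P i) x y) \/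
  (cA /\ ((x = z /\ exists i, y = a i) \/ (y = z /\ exists i, x = a i))) \/
  (cB /\ ((x = z /\ exists i, y = b i) \/ (y = z /\ exists i, x = b i))).

Lemma odd_frame_edge_adj (cA cB : Prop) (bA bB : bool) x y : (cA -> bA) -> (cB -> bB) ->
  odd_valid L x -> odd_valid L y ->
  odd_frame_edge cA cB (odd_emb x) (odd_emb y) -> odd_adj L bA bB rA x y.
Proof.
move=> hA hB vx vy.
have emb_a d i : odd_valid L d -> odd_emb d = a i -> d = OVert i 0.
  by move=> vd; rewrite odd_emb_a; apply: odd_emb_inj.
have emb_b d i : odd_valid L d -> odd_emb d = b i -> d = OVert i L.
  by move=> vd; rewrite odd_emb_b; apply: odd_emb_inj => //=.
have emb_z d : odd_valid L d -> odd_emb d = z -> d = OApex.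
  by move=> vd; apply: (@odd_emb_inj _ OApex).
case=> [[i [j [/(emb_a _ _ vx) -> /(emb_a _ _ vy) -> /andP [neq_ij rij]]]] | edge].
  by rewrite /= (negbTE neq_ij) rij.
case: edge => [[i [j [/(emb_b _ _ vx) -> /(emb_b _ _ vy) -> /andP [neq_ij nrij]]]] | edge].
  by rewrite /= (negbTE neq_ij) (negbTE nrij) eqxx /= orbT.
case: edge => [[i /(path_edge_odd_emb i vx vy) [t _ [[-> ->] | [-> ->]]]] | edge].
- by rewrite /= !eqxx.
- by rewrite /= !eqxx orbT.
case: edge => [[/hA -> [[/(emb_z _ vx) -> [i /(emb_a _ _ vy) ->]] |
                        [/(emb_z _ vy) -> [i /(emb_a _ _ vx) ->]]]] |
               [/hB -> [[/(emb_z _ vx) -> [i /(emb_b _ _ vy) ->]] |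
                        [/(emb_z _ vy) -> [i /(emb_b _ _ vx) ->]]]]];
  by rewrite /= ?eqxx ?orbT.
Qed.

Lemma odd_adj_frame_edge (cA cB : Prop) (bA bB : bool) x y : (bA -> cA) -> (bB -> cB) ->
  odd_valid L x -> odd_valid L y ->
  odd_adj L bA bB rA x y -> odd_frame_edge cA cB (odd_emb x) (odd_emb y).
Proof.
move=> hA hB; have nth_L i : nth z (P i) L = b i := esym (odd_emb_b i).
case: x => [|i t]; case: y => [|j t'] //= vx vy.
- case/orP=> [/andP [/eqP -> /hA cA'] | /andP [/eqP -> /hB cB']].
    by do 3 right; left; split=> //; left; split=> //; exists j.
  by do 4 right; split=> //; left; split=> //; exists j; rewrite nth_L.
- case/orP=> [/andP [/eqP -> /hA cA'] | /andP [/eqP -> /hB cB']].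
    by do 3 right; left; split=> //; right; split=> //; exists i.
  by do 4 right; split=> //; right; split=> //; exists i; rewrite nth_L.
have [<-|neq_ij] := eqVneq i j.
  move=> adj_tt'; do 2 right; left; exists i.
  apply/(@path_edge_odd_emb i (OVert i t) (OVert i t') vx vy).
  by case/orP: adj_tt' => /eqP eq_t; [exists t; last left | exists t'; last right];
    rewrite -?eq_t in vx vy *.
case/orP=> [/andP [/andP [/eqP -> /eqP ->] rij] | /andP [/andP [/eqP -> /eqP ->] rij]].
  by left; exists i, j; rewrite neq_ij rij.
by right; left; exists i, j; rewrite !nth_L neq_ij rij.
Qed.

Variables (cA cB : Prop) (bA bB : bool).
Hypotheses (cA_bA : cA <-> bA) (cB_bB : cB <-> bB)
  (edgeE : forall x y, e x y <-> odd_frame_edge cA cB x y).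

Lemma odd_emb_adj x y : odd_valid L x -> odd_valid L y ->
  e (odd_emb x) (odd_emb y) = odd_adj L bA bB rA x y.
Proof.
move=> vx vy; case: cA_bA cB_bB => [A_bA bA_A] [B_bB bB_B].
apply/idP/idP => [/edgeE | adj_xy]; first exact: odd_frame_edge_adj.
by apply/edgeE; apply: (odd_adj_frame_edge bA_A bB_B).
Qed.

Hypotheses (lt1k : 1 < k) (L_gt0 : 0 < L).

Lemma odd_frame_holes_apex_b (g : rel 'I_k) : bA = false -> bB = true ->
  symmetric g -> irreflexive g -> threshold g -> connected_graph g ->
  (forall i j, i != j -> g i j = rA i j) ->
  forall u v : T, exists C : {set T}, hole e C /\ u \in C /\ v \in C.
Proof.
move=> bA0 bB1 g_sym g_irr g_thr g_conn g_rA.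
have adj_g x y : odd_adj L bA bB rA x y = odd_adj L false true g x y.
  by rewrite bA0 bB1; apply: odd_adj_eq_rel => i j /g_rA.
apply: (common_hole_of_model odd_emb_inj odd_emb_adj odd_emb_surj) => x y vx vy.
apply: (hole_through_morph (valid := odd_valid L) (adj := odd_adj L false true g) (phi := id))
  => //; exact: odd_model_hole_through.
Qed.

Lemma odd_frame_holes_apex_a (g : rel 'I_k) : bA = true -> bB = false ->
  symmetric g -> irreflexive g -> threshold g -> connected_graph g ->
  (forall i j, i != j -> rA i j = ~~ g i j) ->
  forall u v : T, exists C : {set T}, hole e C /\ u \in C /\ v \in C.
Proof.
move=> bA1 bB0 g_sym g_irr g_thr g_conn rA_g.
apply: (common_hole_of_model odd_emb_inj odd_emb_adj odd_emb_surj) => x y vx vy.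
rewrite -(odd_flipK vx) -(odd_flipK vy) bA1 bB0.
apply: (hole_through_morph (adj := odd_adj L false true g) (@odd_flip_valid k L)).
- by move=> x' y' vx' vy' /(congr1 (odd_flip L)); rewrite !odd_flipK.
- by move=> x' y' vx' vy'; apply: odd_adj_flip.
- by apply: odd_model_hole_through; rewrite ?odd_flip_valid.
Qed.
End OddFrame.

Lemma odd_apexed_frame_holes l (T : finType) (e : rel T) : 5 <= l -> odd_apexed_frame l e ->
  forall u v : T, exists C : {set T}, hole e C /\ u \in C /\ v \in C.
Proof.
move=> l5 [k [rA [a [b [Q [z frame]]]]]]; move: frame; cbv zeta.
set gA := [rel i j | (i != j) && rA i j]; set gB := [rel i j | (i != j) && ~~ rA i j].
move=> [k3 rA_sym size_Q [uniq_V mem_V] [thA thB discA discB edgeE]].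
have lt1k : 1 < k by lia.
have L_gt0 : 0 < (l - 3) %/ 2 by lia.
have gA_sym : symmetric gA by move=> i j; rewrite /= eq_sym rA_sym.
have gB_sym : symmetric gB by move=> i j; rewrite /= eq_sym rA_sym.
have gA_irr : irreflexive gA by move=> i; rewrite /= eqxx.
have gB_irr : irreflexive gB by move=> i; rewrite /= eqxx.
have neq_10 : Ordinal lt1k != Ordinal (ltnW lt1k) by [].
have connA_B : connected_graph gA <-> ~ connected_graph gB.
  by apply: (compl_connected_graph gA_sym gA_irr thA neq_10 gB_sym) => i j /=; case: (i != j).
case: discA => [nconnA | [connA _]].
  have connB : connected_graph gB.
    by case: discB => [nconnB | [connB _]] //; case: nconnA; apply/connA_B.
  apply: (odd_frame_holes_apex_a (bA := true) (bB := false) size_Q uniq_V mem_V _ _ edgeE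
           lt1k L_gt0 _ _ gB_sym gB_irr thB connB) => //.
  by move=> i j /= ->; rewrite /= negbK.
apply: (odd_frame_holes_apex_b (bA := false) (bB := true) size_Q uniq_V mem_V _ _ edgeE
         lt1k L_gt0 _ _ gA_sym gA_irr thA connA) => //.
- by split=> // _; apply/connA_B.
- by move=> i j /= ->.
Qed.

(* [EVert (inl i) t] lies on P_i and [EVert (inr j) t] on Q_j, at distance [t] from a_i
   resp. c_j; P_i has length L and Q_j length L + 1. *)
Inductive even_vertex (n m : nat) := EApexA | EApexB | EVert of 'I_n + 'I_m & nat.
Arguments EApexA {n m}. Arguments EApexB {n m}. Arguments EVert {n m}.
Notation EVertP i t := (EVert (inl i) t).
Notation EVertQ j t := (EVert (inr j) t).

Section EvenModel.
Variables (n m L : nat) (r : 'I_n -> 'I_m -> bool).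

Definition even_len (s : 'I_n + 'I_m) : nat := if s is inl _ then L else L.+1.

Definition even_valid (x : even_vertex n m) : bool :=
  if x is EVert s t then t <= even_len s else true.

Definition even_adj (x y : even_vertex n m) : bool :=
  match x, y with
  | EApexA, EVertP _ t | EVertP _ t, EApexA => t == 0
  | EApexA, EVertQ _ t | EVertQ _ t, EApexA => t == 0
  | EApexB, EVertP _ t | EVertP _ t, EApexB => t == L
  | EApexB, EVertQ _ t | EVertQ _ t, EApexB => t == L.+1
  | EVertP i t, EVertP i' t' => (i == i') && ((t.+1 == t') || (t'.+1 == t))
  | EVertP i t, EVertQ j t' | EVertQ j t', EVertP i t =>
      ((t == 0) && (t' == 0) && r i j) || ((t == L) && (t' == L.+1) && ~~ r i j)
  | EVertQ j t, EVertQ j' t' =>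
      if j == j' then (t.+1 == t') || (t'.+1 == t)
      else ((t == 0) && (t' == 0)) || ((t == L.+1) && (t' == L.+1))
  | _, _ => false
  end.

Hypothesis L_gt0 : 0 < L.

Local Notation N := (L + L + 4).

Definition even_cycle_apexes (i i' : 'I_n) (p : nat) : even_vertex n m :=
  if p == 0 then EApexA else if p <= L.+1 then EVertP i p.-1
  else if p == L.+2 then EApexB else EVertP i' (L + L + 3 - p).

Definition even_cycle_apexA (i : 'I_n) (j : 'I_m) (p : nat) : even_vertex n m :=
  if p == 0 then EApexA else if p <= L.+2 then EVertQ j p.-1 else EVertP i (L + L + 3 - p).

Definition even_cycle_apexB (i : 'I_n) (j : 'I_m) (p : nat) : even_vertex n m :=
  if p == 0 then EApexB else if p <= L.+2 then EVertQ j (L.+2 - p) else EVertP i (p - L.+3).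

Definition even_cycle_QQ (j j' : 'I_m) (p : nat) : even_vertex n m :=
  if p <= L.+1 then EVertQ j p else EVertQ j' (L + L + 3 - p).

Lemma even_cycle_apexes_induced i i' : i != i' ->
  induced_cycle even_valid even_adj (even_cycle_apexes i i') N.
Proof.
move=> neq_ii'; have neq_i'i : i' != i by rewrite eq_sym.
rewrite /even_cycle_apexes; split; first by nat_lia.
- by move=> p ltpN; case_ifs => /=; nat_lia.
- by cycle_inj.
- move=> p q ltpN ltqN; case_ifs;
    rewrite /even_adj ?eqxx ?(negbTE neq_ii') ?(negbTE neq_i'i) /cyc_adj /=; nat_lia.
Qed.

Lemma even_cycle_apexA_induced i j : ~~ r i j ->
  induced_cycle even_valid even_adj (even_cycle_apexA i j) N.
Proof.
move=> nrij; rewrite /even_cycle_apexA; split; first by nat_lia.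
- by move=> p ltpN; case_ifs => /=; nat_lia.
- by cycle_inj.
- move=> p q ltpN ltqN; case_ifs; rewrite /even_adj ?eqxx ?(negbTE nrij) /cyc_adj /=; nat_lia.
Qed.

Lemma even_cycle_apexB_induced i j : r i j ->
  induced_cycle even_valid even_adj (even_cycle_apexB i j) N.
Proof.
move=> rij; rewrite /even_cycle_apexB; split; first by nat_lia.
- by move=> p ltpN; case_ifs => /=; nat_lia.
- by cycle_inj.
- move=> p q ltpN ltqN; case_ifs; rewrite /even_adj ?eqxx ?rij /cyc_adj /=; nat_lia.
Qed.

Lemma even_cycle_QQ_induced j j' : j != j' ->
  induced_cycle even_valid even_adj (even_cycle_QQ j j') N.
Proof.
move=> neq_jj'; have neq_j'j : j' != j by rewrite eq_sym.
rewrite /even_cycle_QQ; split; first by nat_lia.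
- by move=> p ltpN; case_ifs => /=; nat_lia.
- by cycle_inj.
- move=> p q ltpN ltqN; case_ifs;
    rewrite /even_adj ?eqxx ?(negbTE neq_jj') ?(negbTE neq_j'j) /cyc_adj /=; nat_lia.
Qed.

Definition through_apexes (i i' : 'I_n) (x : even_vertex n m) : bool :=
  match x with
  | EVertP h t => (t <= L) && ((h == i) || (h == i'))
  | EVertQ _ _ => false
  | _ => true
  end.

Lemma on_even_cycle_apexes i i' x : through_apexes i i' x ->
  on_cycle (even_cycle_apexes i i') N x.
Proof.
rewrite /even_cycle_apexes; case: x => [||[h|//] t] /=; first by on_cycle_at 0.
  by on_cycle_at L.+2.
by case/andP=> le_tL /orP [] /eqP ->; [on_cycle_at t.+1 | on_cycle_at (L + L + 3 - t)].
Qed.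

Section OnCycles.
Variables (i : 'I_n) (j j' : 'I_m) (t : nat).

Lemma on_even_cycle_apexA_Q : t <= L.+1 -> on_cycle (even_cycle_apexA i j) N (EVertQ j t).
Proof. by move=> le_tL1; rewrite /even_cycle_apexA; on_cycle_at t.+1. Qed.

Lemma on_even_cycle_apexA_P : t <= L -> on_cycle (even_cycle_apexA i j) N (EVertP i t).
Proof. by move=> le_tL; rewrite /even_cycle_apexA; on_cycle_at (L + L + 3 - t). Qed.

Lemma on_even_cycle_apexB_Q : t <= L.+1 -> on_cycle (even_cycle_apexB i j) N (EVertQ j t).
Proof. by move=> le_tL1; rewrite /even_cycle_apexB; on_cycle_at (L.+2 - t). Qed.

Lemma on_even_cycle_apexB_P : t <= L -> on_cycle (even_cycle_apexB i j) N (EVertP i t).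
Proof. by move=> le_tL; rewrite /even_cycle_apexB; on_cycle_at (t + L.+3). Qed.

Lemma on_even_cycle_QQ_l : t <= L.+1 -> on_cycle (even_cycle_QQ j j') N (EVertQ j t).
Proof. by move=> le_tL1; rewrite /even_cycle_QQ; on_cycle_at t. Qed.

Lemma on_even_cycle_QQ_r : t <= L.+1 -> on_cycle (even_cycle_QQ j j') N (EVertQ j' t).
Proof. by move=> le_tL1; rewrite /even_cycle_QQ; on_cycle_at (L + L + 3 - t). Qed.
End OnCycles.

Lemma on_even_cycle_apexA_apex i j : on_cycle (even_cycle_apexA i j) N EApexA.
Proof. by exists 0; rewrite ?addn4. Qed.

Lemma on_even_cycle_apexB_apex i j : on_cycle (even_cycle_apexB i j) N EApexB.
Proof. by exists 0; rewrite ?addn4. Qed.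

Hypotheses (lt1n : 1 < n) (ia ib : 'I_n)
  (ia_isolated : forall j, ~~ r ia j) (ib_universal : forall j, r ib j).

Lemma even_Q_hole_through j t y : t <= L.+1 -> even_valid y ->
  hole_through even_valid even_adj (EVertQ j t) y.
Proof.
move=> le_tL1; case: y => [||[i|j'] t'] /= vy.
- apply: induced_cycle_hole_through (even_cycle_apexA_induced (ia_isolated j)) _ _.
  + exact: on_even_cycle_apexA_Q.
  + exact: on_even_cycle_apexA_apex.
- apply: induced_cycle_hole_through (even_cycle_apexB_induced (ib_universal j)) _ _.
  + exact: on_even_cycle_apexB_Q.
  + exact: on_even_cycle_apexB_apex.
- have [rij|nrij] := boolP (r i j).
  + apply: induced_cycle_hole_through (even_cycle_apexB_induced rij) _ _.
    * exact: on_even_cycle_apexB_Q.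
    * exact: on_even_cycle_apexB_P.
  + apply: induced_cycle_hole_through (even_cycle_apexA_induced nrij) _ _.
    * exact: on_even_cycle_apexA_Q.
    * exact: on_even_cycle_apexA_P.
have [<-|neq_jj'] := eqVneq j j'.
  by apply: induced_cycle_hole_through (even_cycle_apexA_induced (ia_isolated j)) _ _;
    exact: on_even_cycle_apexA_Q.
apply: induced_cycle_hole_through (even_cycle_QQ_induced neq_jj') _ _.
- exact: on_even_cycle_QQ_l.
- exact: on_even_cycle_QQ_r.
Qed.

Definition even_P_or_apex (x : even_vertex n m) : bool :=
  if x is EVertQ _ _ then false else even_valid x.

Lemma even_P_or_apex_hole_through x y : even_P_or_apex x -> even_P_or_apex y ->
  hole_through even_valid even_adj x y.
Proof.
move=> PAx PAy.
have [i x_on] : exists i, forall i', through_apexes i i' x.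
  case: x PAx => [||[i|//] t] /= le_tL; [exists ia | exists ia |] => //.
  by exists i => i'; rewrite /= le_tL eqxx.
have [i' neq_ii' y_on] : exists2 i', i != i' & through_apexes i i' y.
  have [i' neq_i'i] := exists_neq_ord i lt1n; rewrite eq_sym in neq_i'i.
  case: y PAy => [||[h|//] t] /= le_tL; try by exists i'.
  have [<-|neq_ih] := eqVneq i h; first by exists i' => //=; rewrite le_tL ?eqxx.
  by exists h => //=; rewrite le_tL ?eqxx ?orbT.
apply: induced_cycle_hole_through (even_cycle_apexes_induced neq_ii') _ _;
  exact: on_even_cycle_apexes.
Qed.

Lemma even_model_hole_through x y : even_valid x -> even_valid y ->
  hole_through even_valid even_adj x y.
Proof.
case: x => [||[i|j] t] vx; last exact: even_Q_hole_through.
all: case: y => [||[i'|j'] t'] vy; last exact/hole_throughC/even_Q_hole_through.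
all: exact: even_P_or_apex_hole_through.
Qed.
End EvenModel.

Lemma enum_sum (T1 T2 : finType) :
  enum {: T1 + T2} = [seq inl x | x <- enum T1] ++ [seq inr y | y <- enum T2].
Proof. by rewrite !enumT unlock /= /sum_enum !unlock. Qed.

Section EvenFrame.
Variables (T : finType) (e : rel T) (n m L : nat) (r : 'I_n -> 'I_m -> bool)
  (a b : 'I_n -> T) (c d : 'I_m -> T) (QP : 'I_n -> seq T) (QQ : 'I_m -> seq T) (za zb : T).
Local Notation P i := (Defs.fpath (a i) (QP i) (b i)).
Local Notation Q j := (Defs.fpath (c j) (QQ j) (d j)).
Local Notation V :=
  (za :: zb :: flatten [seq P i | i <- enum 'I_n] ++ flatten [seq Q j | j <- enum 'I_m]).
Hypotheses (size_QP : forall i, (size (QP i)).+1 = L) (size_QQ : forall j, (size (QQ j)).+1 = L.+1)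
  (uniq_V : uniq V) (mem_V : forall x, x \in V).

Definition even_path (s : 'I_n + 'I_m) : seq T :=
  match s with inl i => P i | inr j => Q j end.

Definition even_emb (x : even_vertex n m) : T :=
  match x with EApexA => za | EApexB => zb | EVert s t => nth za (even_path s) t end.

Lemma flatten_even_paths : flatten [seq even_path s | s <- enum {: 'I_n + 'I_m}] =
  flatten [seq P i | i <- enum 'I_n] ++ flatten [seq Q j | j <- enum 'I_m].
Proof. by rewrite enum_sum map_cat flatten_cat -!map_comp. Qed.

Lemma size_even_path s : size (even_path s) = (even_len L s).+1.
Proof. by case: s => [i|j]; rewrite /even_path size_fpath ?size_QP ?size_QQ. Qed.

Lemma even_valid_size s t : even_valid L (EVert s t) = (t < size (even_path s)).
Proof. by rewrite size_even_path. Qed.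

Lemma even_emb_inj x y : even_valid L x -> even_valid L y -> even_emb x = even_emb y -> x = y.
Proof.
move: uniq_V; rewrite !cons_uniq inE negb_or -flatten_even_paths.
move=> /and3P [/andP [neq_ab za_notin] zb_notin uniq_paths].
have in_paths s t : t <= even_len L s ->
    nth za (even_path s) t \in flatten [seq even_path s | s <- enum {: 'I_n + 'I_m}].
  by move=> le_t; apply/mem_flatten_enum/mem_nth; rewrite size_even_path.
case: x => [||s t]; case: y => [||s' t'] //= vx vy.
- by move/eqP; rewrite (negbTE neq_ab).
- by move=> eq_z; rewrite eq_z in_paths in za_notin.
- by move/esym/eqP; rewrite (negbTE neq_ab).
- by move=> eq_z; rewrite eq_z in_paths in zb_notin.
- by move=> eq_z; rewrite -eq_z in_paths in za_notin.
- by move=> eq_z; rewrite -eq_z in_paths in zb_notin.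
- rewrite -ltnS -size_even_path in vx; rewrite -ltnS -size_even_path in vy.
  by case/(nth_flatten_inj uniq_paths vx vy) => -> ->.
Qed.

Lemma even_emb_surj x : exists2 w, even_valid L w & x = even_emb w.
Proof.
move: (mem_V x); rewrite !inE -flatten_even_paths.
case/or3P=> [/eqP -> | /eqP -> | /flatten_mapP [s _ xs]]; [by exists EApexA | by exists EApexB |].
exists (EVert s (index x (even_path s))); last by rewrite /= nth_index.
by rewrite even_valid_size index_mem.
Qed.

Lemma path_edge_even_emb s x y : even_valid L x -> even_valid L y ->
  path_edge (even_path s) (even_emb x) (even_emb y) <->
  exists2 t, t < even_len L s &
    (x = EVert s t /\ y = EVert s t.+1) \/ (y = EVert s t /\ x = EVert s t.+1).
Proof.
by apply: (path_edge_emb (valid := even_valid L) (emb := even_emb) (vert := EVert s) (x0 := za));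
  rewrite ?size_even_path //; apply: even_emb_inj.
Qed.

Lemma even_emb_b i : b i = even_emb (EVertP i L).
Proof. by rewrite /even_emb /even_path -(size_QP i) nth_fpath_last. Qed.

Lemma even_emb_d j : d j = even_emb (EVertQ j L.+1).
Proof. by rewrite /even_emb /even_path -(size_QQ j) nth_fpath_last. Qed.

Definition even_frame_edge (x y : T) : Prop :=
  (exists j1 j2, [/\ x = c j1, y = c j2 & j1 != j2]) \/
  (exists i j, (x = a i /\ y = c j \/ y = a i /\ x = c j) /\ r i j) \/
  (exists j1 j2, [/\ x = d j1, y = d j2 & j1 != j2]) \/
  (exists i j, (x = b i /\ y = d j \/ y = b i /\ x = d j) /\ ~~ r i j) \/
  (exists i, path_edge (P i) x y) \/
  (exists j, path_edge (Q j) x y) \/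
  ((x = za /\ ((exists i, y = a i) \/ (exists j, y = c j))) \/
   (y = za /\ ((exists i, x = a i) \/ (exists j, x = c j)))) \/
  ((x = zb /\ ((exists i, y = b i) \/ (exists j, y = d j))) \/
   (y = zb /\ ((exists i, x = b i) \/ (exists j, x = d j)))).

Lemma even_frame_edge_adj x y : even_valid L x -> even_valid L y ->
  even_frame_edge (even_emb x) (even_emb y) -> even_adj L r x y.
Proof.
move=> vx vy.
have emb_a w i : even_valid L w -> even_emb w = a i -> w = EVertP i 0.
  by move=> vw; apply: (@even_emb_inj w (EVertP i 0)).
have emb_c w j : even_valid L w -> even_emb w = c j -> w = EVertQ j 0.
  by move=> vw; apply: (@even_emb_inj w (EVertQ j 0)).
have emb_b w i : even_valid L w -> even_emb w = b i -> w = EVertP i L.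
  by move=> vw; rewrite even_emb_b; apply: even_emb_inj => /=.
have emb_d w j : even_valid L w -> even_emb w = d j -> w = EVertQ j L.+1.
  by move=> vw; rewrite even_emb_d; apply: even_emb_inj => /=.
have emb_za w : even_valid L w -> even_emb w = za -> w = EApexA.
  by move=> vw; apply: (@even_emb_inj _ EApexA).
have emb_zb w : even_valid L w -> even_emb w = zb -> w = EApexB.
  by move=> vw; apply: (@even_emb_inj _ EApexB).
case=> [[j1 [j2 [/(emb_c _ _ vx) -> /(emb_c _ _ vy) -> neq_j]]] | edge].
  by rewrite /= (negbTE neq_j).
case: edge => [[i [j [[[/(emb_a _ _ vx) -> /(emb_c _ _ vy) ->] |
                       [/(emb_a _ _ vy) -> /(emb_c _ _ vx) ->]] rij]]] | edge].
1,2: by rewrite /= rij.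
case: edge => [[j1 [j2 [/(emb_d _ _ vx) -> /(emb_d _ _ vy) -> neq_j]]] | edge].
  by rewrite /= (negbTE neq_j) eqxx.
case: edge => [[i [j [[[/(emb_b _ _ vx) -> /(emb_d _ _ vy) ->] |
                       [/(emb_b _ _ vy) -> /(emb_d _ _ vx) ->]] nrij]]] | edge].
1,2: by rewrite /= !eqxx nrij orbT.
case: edge => [[i /(path_edge_even_emb (inl i) vx vy) [t _ [[-> ->] | [-> ->]]]] | edge].
1,2: by rewrite /= !eqxx ?orbT.
case: edge => [[j /(path_edge_even_emb (inr j) vx vy) [t _ [[-> ->] | [-> ->]]]] | edge].
1,2: by rewrite /= !eqxx ?orbT.
case: edge => [[[/(emb_za _ vx) -> [[i /(emb_a _ _ vy) ->] | [j /(emb_c _ _ vy) ->]]] |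
                [/(emb_za _ vy) -> [[i /(emb_a _ _ vx) ->] | [j /(emb_c _ _ vx) ->]]]] |
               [[/(emb_zb _ vx) -> [[i /(emb_b _ _ vy) ->] | [j /(emb_d _ _ vy) ->]]] |
                [/(emb_zb _ vy) -> [[i /(emb_b _ _ vx) ->] | [j /(emb_d _ _ vx) ->]]]]];
  by rewrite /= ?eqxx.
Qed.

Lemma even_adj_frame_edge x y : even_valid L x -> even_valid L y ->
  even_adj L r x y -> even_frame_edge (even_emb x) (even_emb y).
Proof.
have nth_b i : nth za (P i) L = b i := esym (even_emb_b i).
have nth_d j : nth za (Q j) L.+1 = d j := esym (even_emb_d j).
have path_P i t t' : t <= L -> t' <= L -> (t.+1 == t') || (t'.+1 == t) ->
    path_edge (P i) (nth za (P i) t) (nth za (P i) t').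
  move=> le_t le_t' adj_tt'; apply/(@path_edge_even_emb (inl i) (EVertP i t) (EVertP i t')) => //.
  by case/orP: adj_tt' => /eqP eq_t; [exists t; last left | exists t'; last right];
    rewrite -?eq_t in le_t le_t' *.
have path_Q j t t' : t <= L.+1 -> t' <= L.+1 -> (t.+1 == t') || (t'.+1 == t) ->
    path_edge (Q j) (nth za (Q j) t) (nth za (Q j) t').
  move=> le_t le_t' adj_tt'; apply/(@path_edge_even_emb (inr j) (EVertQ j t) (EVertQ j t')) => //.
  by case/orP: adj_tt' => /eqP eq_t; [exists t; last left | exists t'; last right];
    rewrite -?eq_t in le_t le_t' *.
case: x => [||[i|j] t]; case: y => [||[i'|j'] t'] //= vx vy.
- by move/eqP ->; do 6 right; left; left; split=> //; left; exists i'.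
- by move/eqP ->; do 6 right; left; left; split=> //; right; exists j'.
- by move/eqP ->; do 7 right; left; split=> //; left; exists i'; rewrite nth_b.
- by move/eqP ->; do 7 right; left; split=> //; right; exists j'; rewrite nth_d.
- by move/eqP ->; do 6 right; left; right; split=> //; left; exists i.
- by move/eqP ->; do 7 right; right; split=> //; left; exists i; rewrite nth_b.
- by case/andP=> /eqP <- adj_tt'; do 4 right; left; exists i; apply: path_P.
- case/orP=> /andP [/andP [/eqP -> /eqP ->] rij].
    by right; left; exists i, j'; split=> //; left.
  by do 3 right; left; exists i, j'; split=> //; left; rewrite nth_b nth_d.
- by move/eqP ->; do 6 right; left; right; split=> //; right; exists j.
- by move/eqP ->; do 7 right; right; split=> //; right; exists j; rewrite nth_d.
- case/orP=> /andP [/andP [/eqP -> /eqP ->] rij].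
    by right; left; exists i', j; split=> //; right.
  by do 3 right; left; exists i', j; split=> //; right; rewrite nth_b nth_d.
have [<-|neq_jj'] := eqVneq j j'.
  by move=> adj_tt'; do 5 right; left; exists j; apply: path_Q.
case/orP=> /andP [/eqP -> /eqP ->].
  by left; exists j, j'.
by do 2 right; left; exists j, j'; rewrite nth_d nth_d.
Qed.

Lemma even_emb_adj : (forall x y, e x y <-> even_frame_edge x y) ->
  forall x y, even_valid L x -> even_valid L y -> e (even_emb x) (even_emb y) = even_adj L r x y.
Proof.
move=> edgeE x y vx vy; apply/idP/idP => [/edgeE | adj_xy]; first exact: even_frame_edge_adj.
exact/edgeE/even_adj_frame_edge.
Qed.
End EvenFrame.

Lemma even_apexed_frame_holes l (T : finType) (e : rel T) : 6 <= l -> even_apexed_frame l e ->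
  forall u v : T, exists C : {set T}, hole e C /\ u \in C /\ v \in C.
Proof.
move=> l6 [m [n [r [a [b [c [d [QP [QQ [za [zb frame]]]]]]]]]]]; move: frame; cbv zeta.
move=> [[lt1n _] [size_QP size_QQ] [uniq_V mem_V] [_ [[ia ia_iso] [ib ib_univ]]] edgeE].
set L := l %/ 2 - 2 in size_QP.
have size_QQ' j : (size (QQ j)).+1 = L.+1 by rewrite size_QQ /L; lia.
have L_gt0 : 0 < L by rewrite /L; lia.
apply: (common_hole_of_model (even_emb_inj size_QP size_QQ' uniq_V)
          (even_emb_adj size_QP size_QQ' uniq_V edgeE) (even_emb_surj size_QP size_QQ' mem_V)).
by move=> x y; apply: even_model_hole_through.
Qed.

Theorem mainTheorem13 (l : nat) (T : finType) (e : rel T) :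
  apexed_frame l e ->
  forall u v : T, exists C : {set T}, hole e C /\ u \in C /\ v \in C.
Proof.
case=> [[_ [l5 frame]] | [_ [l6 frame]]].
- exact: odd_apexed_frame_holes l5 frame.
- exact: even_apexed_frame_holes l6 frame.
Qed.
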